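(* Let $\varphi$ be an optimal (expected-revenue-maximizing) mixed signaling scheme and let $S$ be a signal of $\varphi$ that is not singleton-splittable, i.e. $\mathrm{rev}(S)>\sum_{j\in S}\varphi_{j,S}\,\mathrm{rev}(j)$. Then both $w_1(S)$ and $w_2(S)$ belong to the set $\{w_1(j): j\in S\}$.
   Context: Setting: $n\ge 2$ bidders, $m$ item types with probabilities $p_j$, nonnegative valuations $v_{i,j}$; $\psi_{i,j}=p_jv_{i,j}$. A mixed signaling scheme is a finite signal set $\mathcal{S}$ and $\varphi:[m]\times\mathcal{S}\to[0,1]$ with $\sum_S\varphi(j,S)=1$ for each $j$; $\varphi_{j,S}=\varphi(j,S)$; a signal is identified with its support $\{j:\varphi_{j,S}>0\}$, so $j\in S$ means $\varphi_{j,S}>0$. Its expected revenue is $\sum_S\mathrm{max2}_i\{\sum_j\psi_{i,j}\varphi_{j,S}\}$ ($\mathrm{max2}$ = second-largest entry with multiplicity). Ties are broken by a fixed priority order on bidders. $w_1(S)$ is the bidder maximizing $\sum_j\psi_{i,j}\varphi_{j,S}$ and $w_2(S)$ the maximizer among $i\ne w_1(S)$; $\mathrm{rev}(S)=\sum_j\varphi_{j,S}\psi_{w_2(S),j}$. For a single type $j$, $w_1(j)$ is the bidder maximizing $\psi_{i,j}$, $w_2(j)$ the maximizer among the others, and $\mathrm{rev}(j)=\psi_{w_2(j),j}=\mathrm{max2}_i\psi_{i,j}$. *)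

From HB Require Import structures.
From mathcomp Require Import all_boot all_order all_algebra all_fingroup.
Set Implicit Arguments. Unset Strict Implicit. Unset Printing Implicit Defensive.
Import Order.TTheory GRing.Theory Num.Theory.
Local Open Scope ring_scope.

Section Auction.
Variables (R : realFieldType) (n m : nat).

(* Fixed priority order on bidders: bidder i has priority rank [pr i];
   a smaller rank wins ties. *)
Variable pr : {perm 'I_n}.

Definition beats (f : 'I_n -> R) (i k : 'I_n) : bool :=
  (f k < f i) || ((f k == f i) && (val (pr i) < val (pr k))%N).

Definition top (f : 'I_n -> R) (A : pred 'I_n) : option 'I_n :=
  [pick i | (i \in A) && [forall k, (k \in A) ==> ((k == i) || beats f i k)]].

Definition win1 (f : 'I_n -> R) : option 'I_n := top f predT.
Definition win2 (f : 'I_n -> R) : option 'I_n :=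
  top f [pred i | Some i != win1 f].

Definition psi (p : 'I_m -> R) (v : 'I_n -> 'I_m -> R) (i : 'I_n) (j : 'I_m) : R :=
  p j * v i j.

Definition bid (p : 'I_m -> R) (v : 'I_n -> 'I_m -> R) (S : finType)
  (phi : 'I_m -> S -> R) (s : S) (i : 'I_n) : R :=
  \sum_(j < m) psi p v i j * phi j s.

Definition w1S p v (S : finType) (phi : 'I_m -> S -> R) (s : S) :=
  win1 (bid p v phi s).
Definition w2S p v (S : finType) (phi : 'I_m -> S -> R) (s : S) :=
  win2 (bid p v phi s).

Definition revS p v (S : finType) (phi : 'I_m -> S -> R) (s : S) : R :=
  if w2S p v phi s is Some i then \sum_(j < m) phi j s * psi p v i j else 0.

Definition w1j p v (j : 'I_m) := win1 (fun i => psi p v i j).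
Definition w2j p v (j : 'I_m) := win2 (fun i => psi p v i j).
Definition revj p v (j : 'I_m) : R :=
  if w2j p v j is Some i then psi p v i j else 0.

Definition is_scheme (S : finType) (phi : 'I_m -> S -> R) : Prop :=
  (forall j s, 0 <= phi j s <= 1) /\ (forall j, \sum_(s : S) phi j s = 1).

(* Expected revenue: sum over signals of the second-highest bid
   (= bid of w2(S), i.e. rev(S)). *)
Definition revenue p v (S : finType) (phi : 'I_m -> S -> R) : R :=
  \sum_(s : S) revS p v phi s.

Definition optimal_scheme p v (S : finType) (phi : 'I_m -> S -> R) : Prop :=
  is_scheme phi /\
  forall (T : finType) (phi' : 'I_m -> T -> R),
    is_scheme phi' -> revenue p v phi' <= revenue p v phi.

End Auction.

From HB Require Import structures.
From mathcomp Require Import all_boot all_order all_algebra all_fingroup.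
Import Order.TTheory GRing.Theory Num.Theory.
Set Implicit Arguments. Unset Strict Implicit. Unset Printing Implicit Defensive.

Local Open Scope ring_scope.

(* If no type j in the support of S had w1(S) (resp. w2(S)) as its top
   bidder, then on every such j that bidder values the item at most
   rev(j) = max2_i psi_{i,j}; summing against phi_{.,S}, its bid on S is at
   most sum_j phi_{j,S} rev(j) < rev(S).  But both w1(S) and w2(S) bid at
   least rev(S), the bid of w2(S). *)

Section TieBrokenMaximum.
Variables (R : realFieldType) (n : nat) (pr : {perm 'I_n}) (f : 'I_n -> R).

Lemma top_max A i :
  top pr f A = Some i -> i \in A /\ forall k, k \in A -> f k <= f i.
Proof.
rewrite /top; case: pickP => // j /andP[jA /forallP beats_all] [<-].
split=> // k kA; have /implyP/(_ kA)/orP[/eqP -> //|] := beats_all k.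
by case/orP => [/ltW //|/andP[/eqP -> _]].
Qed.

(* The tie-broken maximizer is the element of least priority rank among
   those attaining the maximum value of f on A. *)
Lemma top_Some A x : x \in A -> exists i, top pr f A = Some i.
Proof.
move=> xA; rewrite /top; case: pickP => [i _|no_top]; first by exists i.
exfalso; case: (arg_maxP f xA) => a aA a_max.
have aP : (a \in A) && (f a == f a) by apply/andP; split.
case: (@arg_minnP _ a (fun i => (i \in A) && (f i == f a)) (fun i => val (pr i)) aP)
  => b /andP[bA /eqP fb] b_min.
have /negP := no_top b; apply; rewrite bA /=; apply/forallP => k.
apply/implyP => kA; have [//|kb] := eqVneq k b; rewrite /beats fb.
have := a_max k kA; rewrite /= le_eqVlt => /orP[/eqP fk|->//].
rewrite fk eqxx ltxx /=; have := b_min k; rewrite kA fk eqxx => /(_ isT).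
rewrite leq_eqVlt => /orP[/eqP/val_inj/perm_inj bk|->//].
by rewrite bk eqxx in kb.
Qed.

Lemma win1_Some : (0 < n)%N -> exists i, win1 pr f = Some i.
Proof. by move=> n_gt0; apply: (@top_Some _ (Ordinal n_gt0)). Qed.

Lemma win2_Some : (1 < n)%N -> exists i, win2 pr f = Some i.
Proof.
move=> n_gt1; pose i0 : 'I_n := Ordinal (ltnW n_gt1).
pose i1 : 'I_n := Ordinal n_gt1.
rewrite /win2; have [j0|j0] := eqVneq (win1 pr f) (Some i0).
  by apply: (@top_Some _ i1); rewrite inE j0.
by apply: (@top_Some _ i0); rewrite inE eq_sym.
Qed.

Lemma win2_max i k : win2 pr f = Some i -> win1 pr f != Some k -> f k <= f i.
Proof. by move=> /top_max[_ i_max] k_not_w1; apply: i_max; rewrite inE eq_sym. Qed.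

Lemma win1_max i k : win1 pr f = Some i -> f k <= f i.
Proof. by move=> /top_max[_]; apply. Qed.

End TieBrokenMaximum.

Arguments top_Some {R n pr f A} x.

Section SignalRevenue.
Variables (R : realFieldType) (n m : nat) (pr : {perm 'I_n}).
Variables (p : 'I_m -> R) (v : 'I_n -> 'I_m -> R).

Lemma psi_le_revj i j : w1j pr p v j != Some i -> psi p v i j <= revj pr p v j.
Proof.
move=> i_not_w1; rewrite /revj.
have [k w2k] : exists k, w2j pr p v j = Some k.
  by apply: (top_Some i); rewrite inE eq_sym.
by rewrite w2k (win2_max w2k).
Qed.

Variables (S : finType) (phi : 'I_m -> S -> R) (s : S).

Lemma revS_bid c : w2S pr p v phi s = Some c -> revS pr p v phi s = bid p v phi s c.
Proof. by rewrite /revS => ->; apply: eq_bigr => j _; rewrite mulrC. Qed.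

Hypothesis phi_ge0 : forall j, 0 <= phi j s.

Lemma bid_le_sum_revj i :
  (forall j, 0 < phi j s -> w1j pr p v j != Some i) ->
  bid p v phi s i <= \sum_(j < m | 0 < phi j s) phi j s * revj pr p v j.
Proof.
move=> i_wins_none; rewrite /bid [leRHS]big_mkcond /=; apply: ler_sum => j _.
case: ifPn => [phi_gt0|phi_not_gt0].
  by rewrite mulrC ler_wpM2l ?psi_le_revj ?i_wins_none.
have -> : phi j s = 0 by apply/eqP; rewrite eq_le phi_ge0 andbT leNgt.
by rewrite mulr0.
Qed.

Lemma w1j_of_bid_ge_revS i :
  \sum_(j < m | 0 < phi j s) phi j s * revj pr p v j < revS pr p v phi s ->
  revS pr p v phi s <= bid p v phi s i ->
  exists2 j, 0 < phi j s & Some i = w1j pr p v j.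
Proof.
move=> not_splittable rev_le_bid.
have [/existsP[j /andP[phi_gt0 /eqP <-]]|] :=
  boolP [exists j, (0 < phi j s) && (w1j pr p v j == Some i)]; first by exists j.
rewrite negb_exists => /forallP i_wins_none; exfalso.
suff : bid p v phi s i < bid p v phi s i by rewrite ltxx.
apply: le_lt_trans (lt_le_trans not_splittable rev_le_bid).
by apply: bid_le_sum_revj => j phi_gt0; have := i_wins_none j; rewrite phi_gt0.
Qed.

End SignalRevenue.

Theorem claim2 (R : realFieldType) (n m : nat) (pr : {perm 'I_n})
  (p : 'I_m -> R) (v : 'I_n -> 'I_m -> R)
  (Hn : (2 <= n)%N)
  (Hp0 : forall j, 0 <= p j) (Hp1 : \sum_(j < m) p j = 1)
  (Hv : forall i j, 0 <= v i j)
  (S : finType) (phi : 'I_m -> S -> R)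
  (Hopt : optimal_scheme pr p v phi)
  (s : S)
  (Hns : \sum_(j < m | 0 < phi j s) phi j s * revj pr p v j < revS pr p v phi s) :
  (exists2 j : 'I_m, 0 < phi j s & w1S pr p v phi s = w1j pr p v j) /\
  (exists2 j : 'I_m, 0 < phi j s & w2S pr p v phi s = w1j pr p v j).
Proof.
have phi_ge0 j : 0 <= phi j s by case: Hopt => [[/(_ j s)/andP[]]].
have [a w1a] := win1_Some pr (bid p v phi s) (ltnW Hn).
have [c w2c] := win2_Some pr (bid p v phi s) Hn.
have rev_c := revS_bid w2c.
split; [rewrite /w1S w1a | rewrite /w2S w2c];
  apply: w1j_of_bid_ge_revS => //; rewrite rev_c //.
exact: win1_max w1a.
Qed.
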